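(* For every $m\ge1$, every capacity vector $\vec k$ with $k_1+\dots+k_m<n$ and every percentile vector $\vec v\in[0,1]^m$, the percentile mechanism $\mathcal{PM}_{\vec v}$ is absolutely truthful.
   Context: There are $n$ agents with positions $\vec x=(x_1,\dots,x_n)\in[0,1]^n$ and $m$ facilities with positive integer capacities $\vec k=(k_1,\dots,k_m)$, $\sum_j k_j<n$. A facility location is $\vec y=(y_1,\dots,y_m)$, $y_j$ the position of the facility of capacity $k_j$. A fixed priority order on agents breaks ties. FCFS game induced by $(\vec x,\vec y)$: each agent $i$ chooses $s_i\in\{1,\dots,m\}$; $\mathcal S_j$ is the set of agents choosing $j$; $T_j\subseteq\mathcal S_j$ consists of the $\min(k_j,|\mathcal S_j|)$ agents of $\mathcal S_j$ closest to $y_j$ (ties by priority); utility $u_i(\vec x,\vec y;\vec s)=1-|x_i-y_j|$ if $i\in T_j$, and $0$ otherwise. A mechanism is a map $M:[0,1]^n\to\mathbb R^m$. $M$ is absolutely truthful if for every agent $i$, every $\vec x\in[0,1]^n$, every $x_i'\in[0,1]$ and every $\vec s_{-i}\in\{1,\dots,m\}^{n-1}$, $\max_{s_i}u_i(\vec x,M(\vec x);s_i,\vec s_{-i})\ge \max_{s_i'}u_i(\vec x,M(x_i',\vec x_{-i});s_i',\vec s_{-i})$. The percentile mechanism $\mathcal{PM}_{\vec v}$ associated with $\vec v\in[0,1]^m$: sort the reports so that $x_1\le\dots\le x_n$ and set $y_j=x_{i_j}$ with $i_j=\lfloor (n-1)v_j\rfloor+1$ for every $j$. *)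

From mathcomp Require Import all_boot all_order all_algebra.
From mathcomp Require Import fingroup perm reals.
Set Implicit Arguments. Unset Strict Implicit. Unset Printing Implicit Defensive.
Import Order.TTheory GRing.Theory Num.Theory.
Local Open Scope ring_scope.

Section Defs.
Variables (R : realType) (n m : nat).

Definition beats (prio : {perm 'I_n}) (x : 'I_n -> R) (y : R) (a b : 'I_n) : bool :=
  (`|x a - y| < `|x b - y|) || ((`|x a - y| == `|x b - y|) && (prio a < prio b)%N).

(* i belongs to T_j : i chose j and fewer than k_j agents choosing j beat i,
   i.e. i is among the min(k_j,|S_j|) agents of S_j closest to y_j. *)
Definition served (k : 'I_m -> nat) (prio : {perm 'I_n}) (x : 'I_n -> R)
  (y : 'I_m -> R) (s : 'I_n -> 'I_m) (j : 'I_m) (i : 'I_n) : bool :=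
  (s i == j) && (#|[set a | (s a == j) && beats prio x (y j) a i]| < k j)%N.

Definition utility (k : 'I_m -> nat) (prio : {perm 'I_n}) (x : 'I_n -> R)
  (y : 'I_m -> R) (s : 'I_n -> 'I_m) (i : 'I_n) : R :=
  if served k prio x y s (s i) i then 1 - `|x i - y (s i)| else 0.

Definition upd {T : Type} (f : 'I_n -> T) (i : 'I_n) (t : T) : 'I_n -> T :=
  fun a => if a == i then t else f a.

Definition in01 (r : R) : Prop := 0 <= r <= 1.

(* Absolute truthfulness; max over s_i is finite, written as: for every
   deviation strategy s_i' there is a strategy s_i doing at least as well. *)
Definition absolutely_truthful (k : 'I_m -> nat) (prio : {perm 'I_n})
  (M : ('I_n -> R) -> ('I_m -> R)) : Prop :=
  forall (i : 'I_n) (x : 'I_n -> R) (xi' : R) (s : 'I_n -> 'I_m),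
    (forall a, in01 (x a)) -> in01 xi' ->
    forall sj' : 'I_m, exists sj : 'I_m,
      utility k prio x (M (upd x i xi')) (upd s i sj') i
        <= utility k prio x (M x) (upd s i sj) i.

(* Percentile mechanism: y_j = (i_j)-th smallest report, with
   i_j = floor((n-1) v_j) + 1 (1-indexed), i.e. index floor((n-1) v_j) 0-indexed.
   truncn = floor on nonnegative reals. *)
Definition percentile_mech (v : 'I_m -> R) (x : 'I_n -> R) : 'I_m -> R :=
  fun j => nth 0 (sort <=%R [seq x a | a <- enum 'I_n])
                 (Num.truncn ((n.-1)%:R * v j)).
End Defs.

From mathcomp Require Import all_boot all_order all_algebra.
From mathcomp Require Import fingroup perm reals.
From mathcomp Require Import lra.
Set Implicit Arguments. Unset Strict Implicit. Unset Printing Implicit Defensive.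
Import Order.TTheory GRing.Theory Num.Theory.
Local Open Scope ring_scope.

(* Misreporting can only push each percentile facility away from the agent:
   if y is the r-th smallest true report and y' the r-th smallest report after
   agent i deviates, then y lies between x_i and y' (compare how many reports
   fall below y before and after the change).  Hence the agent is closer to y
   than to y', and every agent beating i at y' also beats i at y; so whatever
   i obtains at facility j after misreporting, it obtains at least as much by
   reporting truthfully and choosing the same facility. *)

Section OrderStatistics.
Local Open Scope order_scope.
Variables (d : Order.disp_t) (T : orderType d) (x0 : T).

Definition between (a b c : T) : bool := (a <= b <= c) || (c <= b <= a).

Section DownwardClosed.
Variable P : pred T.
Hypothesis P_down : forall a b, a <= b -> P b -> P a.

Lemma sorted_nth_count (u : seq T) (r : nat) :
  sorted <=%O u -> (r < size u)%N -> P (nth x0 u r) = (r < count P u)%N.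
Proof.
elim: u r => [//|a u IHu] r /= u_sorted r_lt.
have nPa_count : ~~ P a -> count P u = 0%N.
  move=> nPa; apply/eqP; rewrite -leqn0 leqNgt -has_count; apply/hasP.
  case=> b b_u Pb; move/negP: nPa; apply.
  exact: P_down (allP (order_path_min le_trans u_sorted) b b_u) Pb.
case: r r_lt => [|r] r_lt /=.
  by case Pa: (P a) => //=; rewrite nPa_count ?Pa.
rewrite IHu ?(path_sorted u_sorted) //; case Pa: (P a) => //=.
by rewrite nPa_count ?Pa.
Qed.

Lemma nth_sort_count (s : seq T) (r : nat) :
  (r < size s)%N -> P (nth x0 (sort <=%O s) r) = (r < count P s)%N.
Proof.
move=> r_lt; rewrite -(count_sort <=%O) sorted_nth_count ?size_sort //.
Qed.

Lemma nth_sort_count_mono (s s' : seq T) (r : nat) :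
  (r < size s)%N -> size s' = size s -> (count P s' <= count P s)%N ->
  P (nth x0 (sort <=%O s') r) -> P (nth x0 (sort <=%O s) r).
Proof.
move=> r_lt size_eq count_le; rewrite !nth_sort_count ?size_eq // => lt_r.
exact: leq_trans count_le.
Qed.

End DownwardClosed.

Lemma count_map_update (I : eqType) (P : pred T) (x x' : I -> T) (i : I)
    (s : seq I) :
  (forall a, a != i -> x' a = x a) -> (P (x' i) -> P (x i)) ->
  (count P (map x' s) <= count P (map x s))%N.
Proof.
move=> eq_x Pi; rewrite !count_map; apply: sub_count => a /=.
by case: (eqVneq a i) => [->|/eq_x ->].
Qed.

Lemma nth_sort_update_between (I : finType) (x x' : I -> T) (i : I) (r : nat) :
  (forall a, a != i -> x' a = x a) ->
  between (x i) (nth x0 (sort <=%O (map x (enum I))) r)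
                (nth x0 (sort <=%O (map x' (enum I))) r).
Proof.
move=> eq_x; have size_eq : size (map x' (enum I)) = size (map x (enum I)).
  by rewrite !size_map.
have [r_lt|r_ge] := ltnP r (size (map x (enum I))); last first.
  by rewrite !nth_default ?size_sort ?size_eq // /between lexx andbT le_total.
set y := nth x0 _ r; set y' := nth x0 _ r; rewrite /between.
case: (ltgtP (x i) y) => [xi_lt|xi_gt|<-] /=; rewrite ?andbT ?andbF ?orbF.
- rewrite leNgt; apply/negP => y'_lt; suff : y < y by rewrite ltxx.
  apply: (@nth_sort_count_mono (fun z => z < y) _ _ (map x' (enum I))) => //.
  + by move=> a b; apply: le_lt_trans.
  + by apply: count_map_update => [|_]; [exact: eq_x | exact: xi_lt].
- apply: (@nth_sort_count_mono (fun z => z <= y) _ (map x' (enum I)));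
    rewrite ?size_eq //.
  + by move=> a b; apply: le_trans.
  + by apply: count_map_update => [a /eq_x //|]; rewrite leNgt xi_gt.
- exact: le_total.
Qed.
End OrderStatistics.

Lemma nth_sort_all (T : Type) (leT : rel T) (P : pred T) (x0 : T) (s : seq T)
    (r : nat) :
  P x0 -> all P s -> P (nth x0 (sort leT s) r).
Proof.
move=> Px0; rewrite -(all_sort _ leT) => /(all_nthP x0) Ps.
by have [/Ps|/(nth_default x0) ->] := ltnP r (size (sort leT s)).
Qed.

Section Distances.
Variable R : realDomainType.
Implicit Types a b c z : R.

Lemma dist_between a b c : between a b c -> `|a - c| = `|a - b| + `|b - c|.
Proof.
case/orP=> /andP[ab bc]; have ac := le_trans ab bc.
- by rewrite !ler0_norm ?subr_le0 //; lra.
- by rewrite !ger0_norm ?subr_ge0 //; lra.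
Qed.

Lemma dist_le_between a b c z :
  between a b c -> `|z - b| <= `|a - b| -> `|z - c| <= `|a - c|.
Proof.
move=> abc zb; rewrite (dist_between abc).
by apply: le_trans (ler_distD b z c) _; rewrite lerD2r.
Qed.

Lemma dist_lt_between a b c z :
  between a b c -> `|z - b| < `|a - b| -> `|z - c| < `|a - c|.
Proof.
move=> abc zb; rewrite (dist_between abc).
by apply: le_lt_trans (ler_distD b z c) _; rewrite ltrD2r.
Qed.

End Distances.

Section Monotonicity.
Variables (R : realType) (n m : nat) (k : 'I_m -> nat) (prio : {perm 'I_n}).
Variable x : 'I_n -> R.

Lemma beats_between (y y' : R) (a i : 'I_n) :
  between (x i) y y' -> beats prio x y a i -> beats prio x y' a i.
Proof.
rewrite /beats => iyy' /orP[lt_ai|/andP[/eqP eq_ai ->]].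
  by rewrite (dist_lt_between iyy' lt_ai).
by rewrite andbT orbC -le_eqVlt (dist_le_between iyy') ?eq_ai.
Qed.

Lemma served_between (y y' : 'I_m -> R) (s : 'I_n -> 'I_m) (j : 'I_m)
    (i : 'I_n) :
  between (x i) (y j) (y' j) ->
  served k prio x y' s j i -> served k prio x y s j i.
Proof.
rewrite /served => iyy' /andP[-> lt_k] /=; apply: leq_ltn_trans lt_k.
apply/subset_leq_card/subsetP => a; rewrite !inE => /andP[-> /=].
exact: beats_between.
Qed.

Lemma utility_between (y y' : 'I_m -> R) (s : 'I_n -> 'I_m) (i : 'I_n) :
  in01 (x i) -> in01 (y (s i)) -> between (x i) (y (s i)) (y' (s i)) ->
  utility k prio x y' s i <= utility k prio x y s i.
Proof.
move=> /andP[xi0 xi1] /andP[y0 y1] iyy'; rewrite /utility.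
have [/(served_between iyy') ->|_] := ifP.
  by rewrite lerD2l lerN2 (dist_between iyy') lerDl.
by case: ifP => // _; rewrite subr_ge0 ler_norml; lra.
Qed.

End Monotonicity.

Section Percentile.
Variables (R : realType) (n m : nat) (v : 'I_m -> R).

Lemma percentile_mech_in01 (x : 'I_n -> R) (j : 'I_m) :
  (forall a, in01 (x a)) -> in01 (percentile_mech v x j).
Proof.
move=> x01; apply: (@nth_sort_all _ _ (fun r : R => 0 <= r <= 1)).
  by rewrite /= lexx ler01.
by apply/allP => _ /mapP[a _ ->]; exact: x01.
Qed.

Lemma percentile_mech_upd_between (x : 'I_n -> R) (i : 'I_n) (xi' : R)
    (j : 'I_m) :
  between (x i) (percentile_mech v x j) (percentile_mech v (upd x i xi') j).
Proof.
by apply: nth_sort_update_between => a /negbTE a_neq_i; rewrite /upd a_neq_i.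
Qed.

End Percentile.

Theorem theorem2 (R : realType) (n m : nat) (k : 'I_m -> nat)
  (prio : {perm 'I_n}) (v : 'I_m -> R) :
  (1 <= m)%N ->
  (forall j, (0 < k j)%N) ->
  (\sum_(j < m) k j < n)%N ->
  (forall j, 0 <= v j <= 1) ->
  absolutely_truthful k prio (@percentile_mech R n m v).
Proof.
move=> _ _ _ _ i x xi' s x01 _ j; exists j.
have upd_sj : upd s i j i = j by rewrite /upd eqxx.
apply: utility_between; rewrite ?upd_sj.
- exact: x01.
- exact: percentile_mech_in01.
- exact: percentile_mech_upd_between.
Qed.
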